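(* Let $C$ be a finite cyclic group of even order. Then there exist permutations $\alpha$ and $\beta$ of $C$ such that $c\,\alpha(c)=\beta(c)$ for all $c\in C$ with $c\neq1$, and moreover $\beta(1)=1$ and $\alpha(1)\neq1$. *)

From mathcomp Require Import all_boot all_fingroup all_solvable.
Set Implicit Arguments. Unset Strict Implicit. Unset Printing Implicit Defensive.

(* Write C = <[g]> with #[g] = 2m and work with exponents modulo 2m.  Take
   alpha(0) = m, alpha(k) = k for 0 < k < m and alpha(k) = k + 1 for k >= m
   (so alpha(2m - 1) = 0).  Then k + alpha(k) is 2k on (0, m), 2k + 1 - 2m on
   [m, 2m - 1) and 2m - 1 at k = 2m - 1: the nonzero even residues, the odd
   residues below 2m - 1, and 2m - 1, each hit exactly once.  Hence
   beta(k) = k + alpha(k) for k <> 0, with beta(0) = 0, is a permutation. *)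

From mathcomp Require Import all_boot all_fingroup all_solvable.
From mathcomp Require Import zify.

Definition alpha_exp (m k : nat) : nat :=
  if k == 0 then m else if k < m then k
  else if k < (2 * m).-1 then k.+1 else 0.

Definition beta_exp (m k : nat) : nat :=
  if k == 0 then 0 else if k < m then 2 * k
  else if k < (2 * m).-1 then 2 * k + 1 - 2 * m else (2 * m).-1.

Section ExponentMaps.

Variable m : nat.

Lemma alpha_exp_lt : {homo alpha_exp m : k / k < 2 * m}.
Proof. by move=> k; rewrite /alpha_exp; repeat case: ifP; lia. Qed.

Lemma beta_exp_lt : {homo beta_exp m : k / k < 2 * m}.
Proof. by move=> k; rewrite /beta_exp; repeat case: ifP; lia. Qed.

Lemma alpha_exp_inj : {in gtn (2 * m) &, injective (alpha_exp m)}.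
Proof. by move=> i j; rewrite /alpha_exp !inE; repeat case: ifP; lia. Qed.

Lemma beta_exp_inj : {in gtn (2 * m) &, injective (beta_exp m)}.
Proof. by move=> i j; rewrite /beta_exp !inE; repeat case: ifP; lia. Qed.

Lemma add_alpha_exp k : 0 < k < 2 * m ->
  k + alpha_exp m k = beta_exp m k %[mod 2 * m].
Proof.
rewrite /alpha_exp /beta_exp => k_range; case: ifP => [|_]; first lia.
case: ifP => [k_lt_m|k_ge_m]; first by congr (_ %% _); lia.
case: ifP => [k_lt|k_ge]; last by congr (_ %% _); lia.
have -> : k + k.+1 = (2 * k + 1 - 2 * m) + 2 * m by lia.
by rewrite modnDr.
Qed.

End ExponentMaps.

Local Open Scope group_scope.

Lemma perm_of_exponent_map (gT : finGroupType) (g : gT) (f : nat -> nat) :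
    [set: gT] = <[g]> -> {homo f : i / i < #[g]} ->
    {in gtn #[g] &, injective f} ->
  exists s : {perm gT}, forall i, i < #[g] -> s (g ^+ i) = g ^+ f i.
Proof.
move=> gen_g f_lt f_inj.
have logP (x : gT) : {i | i < #[g] & x = g ^+ i}.
  by apply: cyclePmin; rewrite -gen_g inE.
pose log x := s2val (logP x).
have log_lt x : log x < #[g] by rewrite /log; case: (logP x).
have expg_log x : g ^+ log x = x by rewrite /log; case: (logP x).
have expg_inj : {in gtn #[g] &, injective (fun i => g ^+ i)}.
  by move=> i j i_lt j_lt /eqP; rewrite eq_expg_mod_order !modn_small // => /eqP.
have log_expg i : i < #[g] -> log (g ^+ i) = i.
  by move=> i_lt; apply: expg_inj; rewrite ?inE ?expg_log.
have s_inj : injective (fun x => g ^+ f (log x)).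
  move=> x y /expg_inj fxy; rewrite -[x]expg_log -[y]expg_log.
  by rewrite (f_inj _ _ (log_lt x) (log_lt y)) // fxy // inE f_lt.
by exists (perm s_inj) => i i_lt; rewrite permE /= log_expg.
Qed.

Theorem lemma4p6 (gT : finGroupType)
  (Hcyc : cyclic [set: gT]) (Heven : ~~ odd #|gT|) :
  exists alpha beta : {perm gT},
    [/\ (forall c : gT, c != 1 -> c * alpha c = beta c),
        beta 1 = 1 & alpha 1 != 1].
Proof.
have [g gen_g] := cyclicP Hcyc.
have order_g : #[g] = (2 * #[g]./2)%N.
  have card_g : #[g] = #|gT| by rewrite /order -gen_g cardsT.
  by have := odd_double_half #[g]; rewrite {1}card_g (negbTE Heven); lia.
set m := #[g]./2 in order_g.
have exp_perm f := @perm_of_exponent_map gT g f gen_g; rewrite order_g in exp_perm.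
have [alpha alphaE] := exp_perm _ (alpha_exp_lt m) (@alpha_exp_inj m).
have [beta betaE] := exp_perm _ (beta_exp_lt m) (@beta_exp_inj m).
have n_gt0 : (0 < 2 * m)%N by rewrite -order_g order_gt0.
exists alpha, beta; split.
- move=> c c_neq1; have /cyclePmin[k k_lt c_def] : c \in <[g]> by rewrite -gen_g inE.
  rewrite order_g in k_lt.
  have k_gt0 : (0 < k)%N by rewrite lt0n; apply: contraNneq c_neq1 => k0; rewrite c_def k0.
  rewrite c_def alphaE // betaE // -expgD; apply/eqP.
  by rewrite eq_expg_mod_order order_g; apply/eqP/add_alpha_exp; rewrite k_gt0.
- by rewrite -(expg0 g) betaE.
- rewrite -(expg0 g) alphaE // -order_dvdn order_g /alpha_exp /=.
  by apply/negP => /dvdn_leq; lia.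
Qed.
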